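(* For every integer $k\ge 1$, the complete multipartite graph $K_{1*k,2*(k-1)}$ (with $k$ parts of size $1$ and $k-1$ parts of size $2$) has m-number $m(K_{1*k,2*(k-1)})=k+1$.
   Context: All graphs are finite, simple and undirected. A list assignment $L$ for a graph $G$ assigns to each vertex $v$ a set $L(v)$ of colors; an $L$-coloring is a proper vertex coloring $c$ of $G$ with $c(v)\in L(v)$ for every vertex $v$. A $k$-list assignment is a list assignment with $|L(v)|=k$ for all $v$. $G$ is uniquely $k$-list colorable (U$k$LC) if there exists a $k$-list assignment $L$ such that $G$ has exactly one $L$-coloring. $G$ has property $M(k)$ if it is not U$k$LC, i.e. for every $k$-list assignment $L$, $G$ has either no $L$-coloring or at least two $L$-colorings. The m-number $m(G)$ is the least integer $k\ge 1$ such that $G$ has property $M(k)$. (Every U$k$LC graph is also U$(k-1)$LC, so $G$ is U$k$LC iff $k<m(G)$.) *)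

From mathcomp Require Import all_boot.
Set Implicit Arguments. Unset Strict Implicit. Unset Printing Implicit Defensive.

Definition simple_graph (T : finType) (adj : rel T) : Prop :=
  symmetric adj /\ irreflexive adj.

Definition k_list_assignment (T : finType) (k : nat) (L : T -> seq nat) : Prop :=
  forall v, uniq (L v) /\ size (L v) = k.

Definition L_coloring (T : finType) (adj : rel T) (L : T -> seq nat)
  (c : T -> nat) : Prop :=
  (forall v, c v \in L v) /\ (forall u v, adj u v -> c u != c v).

Definition unique_L_coloring (T : finType) (adj : rel T) (L : T -> seq nat) : Prop :=
  exists c, L_coloring adj L c /\
    forall c', L_coloring adj L c' -> forall v, c' v = c v.

Definition UkLC (T : finType) (adj : rel T) (k : nat) : Prop :=
  exists L : T -> seq nat, k_list_assignment k L /\ unique_L_coloring adj L.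

Definition property_M (T : finType) (adj : rel T) (k : nat) : Prop :=
  ~ UkLC adj k.

Definition is_m_number (T : finType) (adj : rel T) (m : nat) : Prop :=
  1 <= m /\ property_M adj m /\
  forall j, 1 <= j -> j < m -> ~ property_M adj j.

(* Complete multipartite graph K_{1*k, 2*(k-1)}: vertices are 'I_k (the k
   singleton parts) plus pairs (j, b) with j : 'I_(k-1), b : bool (the k-1
   parts of size 2, part j = {(j,false),(j,true)}). *)
Definition Kvert (k : nat) : finType := ('I_k + ('I_k.-1 * bool))%type.

Definition Kpart (k : nat) (x : Kvert k) : 'I_k + 'I_k.-1 :=
  match x with
  | inl i => inl i
  | inr p => inr p.1
  end.

Definition Kadj (k : nat) : rel (Kvert k) := fun x y => Kpart x != Kpart y.

From mathcomp Require Import all_boot zify.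
Set Implicit Arguments. Unset Strict Implicit. Unset Printing Implicit Defensive.

(* If a graph has a unique coloring [c] from lists of size [r+1], then at least
   [2r] vertices share their colour with another vertex.  By induction on [r]:
   if every colour class [C] has a successor class whose colour lies in all the
   lists of [C], rotating colours along a cycle of successors gives a second
   coloring; otherwise some class is blocked, it then has at least two vertices,
   and deleting it, and its colour from all lists, leaves a unique coloring from
   lists of size [r].  In K_{1*k,2*(k-1)} only the [2(k-1)] vertices of the
   pairs can share colours, so the graph has property M(k+1).  Conversely, the
   [2k-1] pairwise adjacent parts see only [2k-1] colours in the lists [Klist],
   which forces a unique coloring, and trimming lists shows that UkLC implies
   UjLC for [j <= k]. *)

Lemma size_filter_neq (T : eqType) (s : seq T) (x : T) :
  uniq s -> size [seq t <- s | t != x] = size s - (x \in s).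
Proof.
move=> us; have -> : [seq t <- s | t != x] = rem x s by rewrite rem_filter.
by have [/size_rem->|/rem_id->] := boolP (x \in s); rewrite ?subn1 ?subn0.
Qed.

(* Points outside the image of [f] can be discarded; once there are none, [f]
   itself permutes [S]. *)
Lemma exists_cycle_rotation (T : finType) (S : {set T}) (f : T -> T) :
  {in S, forall u, f u \in S /\ f u != u} -> S != set0 ->
  exists g : T -> T, [/\ {in S &, injective g},
    {in S, forall u, g u \in S /\ (g u = u \/ g u = f u)} &
    exists2 u, u \in S & g u != u].
Proof.
elim: {S}_.+1 {-2}S (ltnSn #|S|) => // n IH S leSn fS /set0Pn[u0 u0S].
have [onto | /subsetPn[x xS xNf]] := boolP (S \subset f @: S).
  have fSS : f @: S = S.
    apply/eqP; rewrite eqEcard (subset_leq_card onto) andbT.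
    by apply/subsetP => _ /imsetP[u uS ->]; case: (fS u uS).
  exists f; split; first by apply/imset_injP; rewrite fSS.
    by move=> u uS; case: (fS u uS) => fuS _; split; [|right].
  by exists u0 => //; case: (fS u0 u0S).
have fS' : {in S :\ x, forall u, f u \in S :\ x /\ f u != u}.
  move=> u; rewrite !inE => /andP[_ uS]; case: (fS u uS) => fuS fuu.
  by rewrite fuS fuu andbT; split=> //; apply: contraNneq xNf => <-; apply: imset_f.
have [fxS fxx] := fS x xS.
have S'0 : S :\ x != set0 by apply/set0Pn; exists (f x); rewrite !inE fxx.
have ltS' : #|S :\ x| < n by move: leSn; rewrite (cardsD1 x) xS.
have [g [ginj gS [u uS' gu]]] := IH _ ltS' fS' S'0.
have gD1 : {in S :\ x, forall u, g u != x}.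
  by move=> v /gS[/setD1P[]].
exists (fun u => if u == x then x else g u); split.
- move=> v w vS wS /=.
  have [->|vx] := eqVneq v x; have [->|wx] := eqVneq w x => //.
  + by move/esym/eqP; rewrite (negbTE (gD1 w _)) // !inE wx.
  + by move/eqP; rewrite (negbTE (gD1 v _)) // !inE vx.
  + by apply: ginj; rewrite !inE ?vx ?wx.
- move=> v vS /=; have [->|vx] := eqVneq v x; first by split; [|left].
  have vS' : v \in S :\ x by rewrite !inE vx.
  by have [/setD1P[_ ?] ?] := gS v vS'.
- by move: uS' => /setD1P[ux uS]; exists u; rewrite // (negbTE ux).
Qed.

Section RigidColoring.
Variable T : finType.
Implicit Types (D : {set T}) (L : T -> seq nat) (c : T -> nat).

Definition shared D c : {set T} :=
  [set v in D | [exists u in D, (u != v) && (c u == c v)]].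

(* Every [L]-coloring of the complete multipartite graph on [D] whose parts are
   the colour classes of [c] agrees with [c]. *)
Definition rigid D L c : Prop :=
  forall c' : T -> nat, {in D, forall v, c' v \in L v} ->
    {in D &, forall u v, c u != c v -> c' u != c' v} -> {in D, c' =1 c}.

Definition fits_class D L c u w : bool :=
  [forall v in D, (c v == c w) ==> (c u \in L v)].

Lemma rigid_list_colors_used D L c w y :
  {in D, forall v, c v \in L v} -> rigid D L c -> w \in D -> y \in L w ->
  exists2 u, u \in D & c u = y.
Proof.
move=> cL cU wD yL.
have [/exists_inP[u uD /eqP]|/exists_inPn yNc] := boolP [exists u in D, c u == y].
  by exists u.
pose c' v := if v == w then y else c v.
have c'L : {in D, forall v, c' v \in L v}.
  by move=> v vD; rewrite /c'; case: eqP => [->|_] //; apply: cL.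
have c'sep : {in D &, forall u v, c u != c v -> c' u != c' v}.
  move=> u v uD vD; rewrite /c'.
  have [->|_] := eqVneq u w; have [->|_] := eqVneq v w; rewrite ?eqxx // => _.
  - by rewrite eq_sym yNc.
  - by rewrite yNc.
by exists w => //; have := cU c' c'L c'sep w wD; rewrite /c' eqxx.
Qed.

Section ClassSuccessor.
Variables (D : {set T}) (L : T -> seq nat) (c : T -> nat) (w0 : T).
Hypotheses (cL : {in D, forall v, c v \in L v}) (cU : rigid D L c) (w0D : w0 \in D).

Let class_rep w := odflt w0 [pick u in D | c u == c w].

Let class_repP w : w \in D -> class_rep w \in D /\ c (class_rep w) = c w.
Proof.
move=> wD; rewrite /class_rep; case: pickP => [u /andP[uD /eqP]|] //=.
by move/(_ w); rewrite wD eqxx.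
Qed.

Let class_rep_color u v : c u = c v -> class_rep u = class_rep v.
Proof. by rewrite /class_rep => ->. Qed.

(* A successor map between colour classes contains a cycle of classes, and
   rotating the colours along that cycle is a second coloring. *)
Lemma no_class_successor (h : T -> T) :
  ~ {in D, forall w, [/\ h w \in D, c (h w) != c w & fits_class D L c (h w) w]}.
Proof.
move=> hP; pose S := [set u in D | class_rep u == u].
have SP u : u \in S -> u \in D /\ class_rep u = u by rewrite inE => /andP[? /eqP].
have S_inj : {in S &, forall a b, c a = c b -> a = b}.
  by move=> a b /SP[_ ea] /SP[_ eb] /class_rep_color; rewrite ea eb.
have repS v : v \in D -> class_rep v \in S.
  move=> vD; have [rD rc] := class_repP vD.
  by rewrite /S inE rD (class_rep_color rc) eqxx.
pose f u := class_rep (h u).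
have fS : {in S, forall u, f u \in S /\ f u != u}.
  move=> u /SP[uD _]; have [hD hc _] := hP u uD; split; first exact: repS.
  by apply: contraNneq hc => fu; rewrite -[in c u]fu (class_repP hD).2.
have S0 : S != set0 by apply/set0Pn; exists (class_rep w0); apply: repS.
have [g [ginj gS [u0 u0S gu0]]] := exists_cycle_rotation fS S0.
pose c' v := c (g (class_rep v)).
have c'L : {in D, forall v, c' v \in L v}.
  move=> v vD; have [rD rc] := class_repP vD; rewrite /c'.
  have [_ [->|->]] := gS _ (repS v vD); first by rewrite rc cL.
  have [hD _ /forall_inP fit] := hP _ rD.
  by rewrite (class_repP hD).2; apply: (implyP (fit v vD)); rewrite rc.
have c'sep : {in D &, forall u v, c u != c v -> c' u != c' v}.
  move=> u v uD vD; apply: contraNneq => /S_inj e.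
  have /ginj rep_uv := e (gS _ (repS u uD)).1 (gS _ (repS v vD)).1.
  by rewrite -(class_repP uD).2 -(class_repP vD).2 rep_uv ?repS.
have := cU c'L c'sep (SP _ u0S).1; rewrite /c' (SP _ u0S).2.
by move/S_inj => /(_ (gS _ u0S).1 u0S) /eqP; rewrite (negbTE gu0).
Qed.

Lemma rigid_blocked_class : exists2 w, w \in D &
  ~~ [exists u in D, (c u != c w) && fits_class D L c u w].
Proof.
apply/forall_inPn/negP => /forall_inP succ.
apply: (@no_class_successor
  (fun w => odflt w [pick u in D | (c u != c w) && fits_class D L c u w])).
move=> w wD; case: pickP => [u /and3P[]|none] //=.
by case/exists_inP: (succ w wD) => u uD; have := none u; rewrite uD => /= ->.
Qed.

End ClassSuccessor.

Lemma rigid_remove_class D L c x :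
  {in D, forall v, c v \in L v} -> rigid D L c ->
  rigid [set z in D | c z != x] (fun z => [seq t <- L z | t != x]) c.
Proof.
move=> cL cU c' c'L c'sep z /setIdP[zD czx].
pose c2 t := if c t == x then x else c' t.
have c2x t : t \in D -> c t != x -> c2 t != x.
  move=> tD ctx; rewrite /c2 (negbTE ctx).
  have /c'L : t \in [set z in D | c z != x] by rewrite inE tD ctx.
  by rewrite mem_filter => /andP[].
have c2L : {in D, forall t, c2 t \in L t}.
  move=> t tD; rewrite /c2; case: eqP => [<-|/eqP ctx]; first exact: cL.
  have /c'L : t \in [set z in D | c z != x] by rewrite inE tD ctx.
  by rewrite mem_filter => /andP[].
have c2sep : {in D &, forall t1 t2, c t1 != c t2 -> c2 t1 != c2 t2}.
  move=> t1 t2 t1D t2D ne.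
  have [e1|n1] := eqVneq (c t1) x; have [e2|n2] := eqVneq (c t2) x.
  - by rewrite e1 e2 eqxx in ne.
  - by rewrite {1}/c2 e1 eqxx eq_sym c2x.
  - by rewrite {2}/c2 e2 eqxx c2x.
  - by rewrite /c2 (negbTE n1) (negbTE n2) c'sep // inE ?t1D ?t2D ?n1 ?n2.
by have := cU c2 c2L c2sep z zD; rewrite /c2 (negbTE czx).
Qed.

Lemma shared_remove_class D c x :
  shared [set z in D | c z != x] c = [set z in shared D c | c z != x].
Proof.
apply/setP => z; rewrite !inE -andbA andbCA andbA [in RHS]andbC.
have [cz|] := eqVneq (c z) x; rewrite ?andbF ?andbT //= => czx.
congr (_ && _); apply/exists_inP/exists_inP => [[u /setIdP[uD _] ?]|[u uD]].
  by exists u.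
by move=> /andP[uz /eqP cu]; exists u; rewrite ?inE ?uD ?cu ?uz ?eqxx.
Qed.

Lemma rigid_shared_card r : forall D L c w0,
  {in D, forall v, uniq (L v) /\ r.+1 <= size (L v)} ->
  {in D, forall v, c v \in L v} -> rigid D L c -> w0 \in D ->
  r.*2 <= #|shared D c|.
Proof.
elim: r => // r IH D L c w0 Lsz cL cU w0D.
have [w wD /exists_inPn blocked] := rigid_blocked_class cL cU w0D.
have [Lwu Lws] := Lsz w wD.
have [y yL yw] : exists2 y, y \in L w & y != c w.
  apply/hasP; rewrite has_filter -size_eq0 -lt0n size_filter_neq //.
  by case: (c w \in L w) => /=; lia.
have [u uD cuy] := rigid_list_colors_used cL cU wD yL.
have cuw : c u != c w by rewrite cuy.
have [v vD] : exists2 v, v \in D & ~~ ((c v == c w) ==> (c u \in L v)).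
  by apply/forall_inPn; have := blocked u uD; rewrite cuw.
rewrite negb_imply => /andP[/eqP cvw uNv].
have vw : v != w by apply: contraNneq uNv => ->; rewrite cuy.
have IHr : r.*2 <= #|[set z in shared D c | c z != c w]|.
  rewrite -shared_remove_class.
  apply: (IH _ (fun z => [seq t <- L z | t != c w]) c u).
  - move=> z /setIdP[zD _]; have [zu zs] := Lsz z zD.
    rewrite filter_uniq // size_filter_neq //; split=> //.
    by case: (c w \in L z) => /=; lia.
  - by move=> z /setIdP[zD czw]; rewrite mem_filter czw cL.
  - exact: rigid_remove_class.
  - by rewrite inE uD cuw.
have wvS : [set w; v] \subset shared D c.
  apply/subsetP => z; rewrite /shared !inE => /orP[] /eqP->.
  - by rewrite wD /=; apply/exists_inP; exists v; rewrite ?vw ?cvw ?eqxx.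
  - by rewrite vD /=; apply/exists_inP; exists w; rewrite ?(eq_sym w) ?vw ?cvw ?eqxx.
have restS : [set z in shared D c | c z != c w] \subset shared D c :\: [set w; v].
  apply/subsetP => z; rewrite !inE => /andP[zS czw]; rewrite zS andbT.
  by apply: contra czw => /orP[] /eqP->; rewrite ?cvw.
rewrite -(cardsID [set w; v] (shared D c)) (setIidPr wvS) cards2 eq_sym vw.
by have := subset_leq_card restS; lia.
Qed.

Lemma UkLC_shared_card (adj : rel T) r (x0 : T) : UkLC adj r.+1 ->
  exists c, (forall u v, adj u v -> c u != c v) /\ r.*2 <= #|shared [set: T] c|.
Proof.
move=> [L [Lsz [c [[cL cP] cU]]]]; exists c; split=> //.
apply: (@rigid_shared_card r [set: T] L c x0) => //.
- by move=> v _; have [? ->] := Lsz v.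
- move=> c' c'L c'sep v _; apply: cU.
  by split=> [u|u w /cP]; [apply: c'L | apply: c'sep].
Qed.

End RigidColoring.

Lemma UkLC_leq (T : finType) (adj : rel T) j k :
  0 < j <= k -> UkLC adj k -> UkLC adj j.
Proof.
move=> /andP[j1 jk] [L [Lsz [c [[cL cP] cU]]]].
exists (fun v => c v :: take j.-1 (rem (c v) (L v))); split.
  move=> v; have [uL sL] := Lsz v; split.
    rewrite /= take_uniq ?rem_uniq // andbT.
    by apply/negP => /mem_take; rewrite mem_rem_uniq // inE eqxx.
  by rewrite /= size_take size_rem ?cL // sL; case: ifP; lia.
exists c; split; first by split=> // v; rewrite inE eqxx.
move=> c' [c'L c'P]; apply: cU; split=> // v.
have := c'L v; rewrite inE => /orP[/eqP ->|/mem_take/mem_rem //]; exact: cL.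
Qed.

Section CompleteMultipartite.
Variable n : nat.
Local Notation V := (Kvert n.+1).
Local Notation adj := (@Kadj n.+1).

Definition Kcolor (x : V) : nat :=
  match x with inl i => n + i | inr (j, _) => j end.

Definition Klist (x : V) : seq nat :=
  match x with
  | inl i => (n + i) :: iota 0 n
  | inr (j, false) => (j : nat) :: iota n n
  | inr (j, true) => (j : nat) :: (n + n) :: rem (j : nat) (iota 0 n)
  end.

Lemma Klist_assignment : k_list_assignment n.+1 Klist.
Proof.
move=> [i|[[j jn] []]] /=.
- rewrite iota_uniq mem_iota size_iota andbT; split; [apply/negP|]; lia.
- rewrite !inE !(mem_rem_uniq _ (iota_uniq 0 n)) !inE !mem_iota eqxx /= orbF.
  rewrite rem_uniq ?iota_uniq // size_rem ?mem_iota // size_iota.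
  rewrite add0n ltnNge leq_addl andbF /= andbT; split; [apply/negP => /eqP|]; lia.
- rewrite iota_uniq mem_iota size_iota andbT; split; [apply/negP|]; lia.
Qed.

Lemma Kcolor_coloring : L_coloring adj Klist Kcolor.
Proof.
split; first by move=> [i|[j []]]; rewrite /= inE eqxx.
move=> [[i ?]|[[j ?] b]] [[i' ?]|[[j' ?] b']]; rewrite /Kadj /=.
- by apply: contra => /eqP ii'; apply/eqP; congr inl; apply: val_inj => /=; lia.
- by move=> _; apply/negP => /eqP; lia.
- by move=> _; apply/negP => /eqP; lia.
- by apply: contra => /eqP jj'; apply/eqP; congr inr; apply: val_inj.
Qed.

Section Uniqueness.
Variable c : V -> nat.
Hypotheses (cL : forall x, c x \in Klist x) (cP : forall x y, adj x y -> c x != c y).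

Let part_rep (p : 'I_n.+1 + 'I_n) : V :=
  match p with inl i => inl i | inr j => inr (j, false) end.

Let Kpart_rep p : Kpart (part_rep p) = p.
Proof. by case: p. Qed.

Let Klist_bound x t : t \in Klist x -> t < n + n.+1.
Proof.
case: x => [[i ?]|[[j ?] []]] /=;
  rewrite !inE ?(mem_rem_uniq _ (iota_uniq 0 n)) ?inE mem_iota; lia.
Qed.

(* The 2n+1 parts are pairwise adjacent and only 2n+1 colours occur in the
   lists, so every colour is used on exactly one part. *)
Lemma Kcolor_part x : c x = c (part_rep (Kpart x)).
Proof.
pose phi p : 'I_(n + n.+1) := Ordinal (Klist_bound (cL (part_rep p))).
have phi_inj : injective phi.
  move=> p q /(congr1 val) /= cpq; apply/eqP; apply: contraT => pq.
  have /cP : adj (part_rep p) (part_rep q) by rewrite /Kadj !Kpart_rep.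
  by rewrite cpq eqxx.
have card_parts : #|'I_(n + n.+1)| <= #|{: 'I_n.+1 + 'I_n}|.
  by rewrite card_sum !card_ord addnC.
have /codomP[p /(congr1 val) /= cp] :=
  inj_card_onto phi_inj card_parts (Ordinal (Klist_bound (cL x))).
rewrite cp; congr (c (part_rep _)); apply/eqP; apply: contraT => px.
have /cP : adj x (part_rep p) by rewrite /Kadj Kpart_rep eq_sym.
by rewrite cp eqxx.
Qed.

Lemma Kcolor_pair (j : 'I_n) b : c (inr (j, b)) = j.
Proof.
have same : c (inr (j, true)) = c (inr (j, false)) by rewrite Kcolor_part.
have := cL (inr (j, false)); have := cL (inr (j, true)); case: j same => j jn same.
rewrite /= same !inE (mem_rem_uniq _ (iota_uniq 0 n)) !inE !mem_iota.
case: b; rewrite ?same; move: (c _) => t; lia.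
Qed.

Lemma Kcolor_single (i : 'I_n.+1) : c (inl i) = n + i.
Proof.
have := cL (inl i); rewrite /= inE mem_iota => /orP[/eqP //|/andP[_ t_lt]].
have /cP : adj (inl i) (inr (Ordinal t_lt, false)) by [].
by rewrite Kcolor_pair eqxx.
Qed.

Lemma Klist_coloring_unique : c =1 Kcolor.
Proof. by case=> [i|[j b]]; rewrite ?Kcolor_single ?Kcolor_pair. Qed.

End Uniqueness.

Lemma K_UkLC : UkLC adj n.+1.
Proof.
exists Klist; split; first exact: Klist_assignment.
exists Kcolor; split; first exact: Kcolor_coloring.
by move=> c [cL cP]; apply: Klist_coloring_unique.
Qed.

Lemma K_shared_card (c : V -> nat) :
  (forall x y, adj x y -> c x != c y) -> #|shared [set: V] c| <= n.*2.
Proof.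
move=> cP; have pairs : shared [set: V] c \subset [set inr p | p : 'I_n * bool].
  apply/subsetP => -[i /setIdP[_ /exists_inP[u _ /andP[ui /eqP cu]]]|p _].
    have /cP : adj u (inl i) by case: u ui {cu} => [i'|p] //=; rewrite /Kadj.
    by rewrite cu eqxx.
  exact: imset_f.
have := subset_leq_card pairs.
by rewrite card_imset; [rewrite card_prod card_ord card_bool muln2 | exact: inr_inj].
Qed.

Lemma K_property_M : property_M adj n.+2.
Proof.
move=> /(UkLC_shared_card (inl ord0)) [c [cP shared_big]].
by have := leq_trans shared_big (K_shared_card cP); rewrite leq_double ltnn.
Qed.

End CompleteMultipartite.

Theorem mainTheorem15 :
  forall k : nat, 1 <= k -> is_m_number (@Kadj k) k.+1.
Proof.
move=> [//|n] _; split=> //; split; first exact: K_property_M.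
by move=> j j1 jn; apply; apply: (UkLC_leq _ (K_UkLC n)); rewrite j1.
Qed.
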